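(* There exists a hypothesis class $\mathcal H$ of VC dimension $1$ such that every protocol that learns $\mathcal H$ in the agnostic case with error parameter $\epsilon$ has sample complexity at least $\tilde\Omega(1/\epsilon)$.
   Context: Communication model: Let $\mathcal X$ be a domain and $\mathcal Z=\mathcal X\times\{\pm1\}$ the set of examples. A sample is a finite sequence of examples. Alice receives a sample $S_a$ and Bob a sample $S_b$; the joint sample $S=(S_a,S_b)$ is their concatenation, arbitrarily split. A deterministic protocol proceeds by messages, each either a single example from the sender's own input sample or a single bit, depending only on the sender's input and previous messages; output is determined by the messages. Each example or bit costs one unit; sample complexity is the maximal number of units transmitted. $L_S(h)=\frac{1}{|S|}\sum_{(x,y)\in S}1[h(x)\ne y]$. A protocol learns $\mathcal H$ in the agnostic case with error $\epsilon$ if for every input sample $S$ (no realizability assumption) it outputs a hypothesis $h:\mathcal X\to\{\pm1\}$ (not necessarily in $\mathcal H$) with $L_S(h)\le\min_{f\in\mathcal H}L_S(f)+\epsilon$. $\tilde\Omega$ denotes a lower bound up to logarithmic factors. *)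

From Stdlib Require Import Reals List.
Import ListNotations.
Open Scope R_scope.

(* Labels {+1,-1} are encoded as bool: true = +1, false = -1. *)
Definition example (X : Type) : Type := (X * bool)%type.
Definition sample (X : Type) : Type := list (example X).
Definition hypothesis (X : Type) : Type := X -> bool.

Definition emp_loss {X : Type} (s : sample X) (h : hypothesis X) : R :=
  INR (length (filter (fun z => negb (Bool.eqb (h (fst z)) (snd z))) s))
  / INR (length s).

Definition shatters {X : Type} (H : hypothesis X -> Prop) (A : list X) : Prop :=
  forall f : X -> bool, exists h, H h /\ forall x, In x A -> h x = f x.

Definition VC_dim_eq {X : Type} (H : hypothesis X -> Prop) (d : nat) : Prop :=
  (exists A : list X, NoDup A /\ length A = d /\ shatters H A) /\
  (forall A : list X, NoDup A -> shatters H A -> (length A <= d)%nat).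

Inductive party := Alice | Bob.

Inductive message (X : Type) : Type :=
| MEx : example X -> message X
| MBit : bool -> message X.
Arguments MEx {X}.
Arguments MBit {X}.

Record protocol (X : Type) : Type := Protocol {
  (* who speaks next (None = the protocol has halted), a function of the
     messages sent so far *)
  next_speaker : list (message X) -> option party;
  alice_msg : sample X -> list (message X) -> message X;
  bob_msg : sample X -> list (message X) -> message X;
  output : list (message X) -> hypothesis X }.
Arguments next_speaker {X}.
Arguments alice_msg {X}.
Arguments bob_msg {X}.
Arguments output {X}.

Definition msg_from {X : Type} (s : sample X) (m : message X) : Prop :=
  match m with MEx z => In z s | MBit _ => True end.

Definition valid_protocol {X : Type} (P : protocol X) : Prop :=
  forall (s : sample X) (t : list (message X)),
    msg_from s (alice_msg P s t) /\ msg_from s (bob_msg P s t).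

Fixpoint transcript_upto {X : Type} (P : protocol X) (sa sb : sample X)
  (n : nat) : list (message X) :=
  match n with
  | O => []
  | Datatypes.S n' =>
      let t := transcript_upto P sa sb n' in
      match next_speaker P t with
      | None => t
      | Some Alice => t ++ [alice_msg P sa t]
      | Some Bob => t ++ [bob_msg P sb t]
      end
  end.

Definition halts_with {X : Type} (P : protocol X) (sa sb : sample X)
  (t : list (message X)) : Prop :=
  exists n, transcript_upto P sa sb n = t /\ next_speaker P t = None.

Definition learns_agnostic {X : Type} (H : hypothesis X -> Prop) (eps : R)
  (P : protocol X) : Prop :=
  forall sa sb : sample X, exists t, halts_with P sa sb t /\
    forall f, H f -> emp_loss (sa ++ sb) (output P t) <= emp_loss (sa ++ sb) f + eps.

(* sample complexity of P is at least B: some input makes P transmit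
   at least B units (each example or bit = one message = one unit) *)
Definition sample_complexity_ge {X : Type} (P : protocol X) (B : R) : Prop :=
  exists (sa sb : sample X) (t : list (message X)),
    halts_with P sa sb t /\ B <= INR (length t).

(* Fooling set.  Let Alice hold the points 0..n-1 labelled by a bit vector A
   and Bob the same points labelled by the complement of A.  If two distinct
   vectors A, A' produced the same transcript, the rectangle property of
   deterministic protocols would make it the transcript of both crossed inputs
   (A, complement A') and (A', complement A) as well.  On a point j with
   A_j <> A'_j each crossed sample carries one label twice, so a singleton
   indicator beats the output of the protocol on one of the two crossed
   samples by a whole mistake; once 2 n eps < 1 that exceeds the tolerated
   error.  Hence the 2^n inputs yield distinct transcripts over an alphabet of
   2n + 2 messages, so some transcript has length at least
   n ln 2 / ln (2n + 3), which is of order 1 / (eps ln (1/eps)) for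
   n ~ 1 / (4 eps). *)
From Stdlib Require Import Reals List Lia Lra ZArith ClassicalEpsilon.
Import ListNotations.
Open Scope R_scope.

Section Transcripts.

Context {X : Type} (P : protocol X).

Definition halted (t : list (message X)) : Prop := next_speaker P t = None.

Lemma transcript_upto_length_le a b k : (length (transcript_upto P a b k) <= k)%nat.
Proof.
  induction k as [|k IH]; simpl; [lia|].
  destruct (next_speaker P _) as [[|]|]; rewrite ?length_app; simpl; lia.
Qed.

Lemma transcript_upto_length_running a b k :
  ~ halted (transcript_upto P a b k) -> length (transcript_upto P a b k) = k.
Proof.
  unfold halted. induction k as [|k IH]; simpl; intro Hrun; [reflexivity|].
  destruct (next_speaker P (transcript_upto P a b k)) as [[|]|] eqn:E;
    [| |contradiction].
  all: rewrite length_app, IH by congruence; simpl; lia.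
Qed.

Lemma transcript_upto_prefix a b k d :
  exists r, transcript_upto P a b (k + d) = transcript_upto P a b k ++ r.
Proof.
  induction d as [|d [r Hr]].
  - exists []. now rewrite Nat.add_0_r, app_nil_r.
  - rewrite Nat.add_succ_r. simpl. rewrite Hr.
    destruct (next_speaker P _) as [[|]|].
    + eexists. now rewrite <- app_assoc.
    + eexists. now rewrite <- app_assoc.
    + now exists r.
Qed.

Lemma transcript_upto_halted a b k d :
  halted (transcript_upto P a b k) -> transcript_upto P a b (k + d) = transcript_upto P a b k.
Proof.
  unfold halted. intro Hh. induction d as [|d IH].
  - now rewrite Nat.add_0_r.
  - rewrite Nat.add_succ_r. simpl. now rewrite IH, Hh.
Qed.

Lemma halts_with_unique a b t1 t2 :
  halts_with P a b t1 -> halts_with P a b t2 -> t1 = t2.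
Proof.
  intros [N1 [<- H1]] [N2 [<- H2]].
  destruct (Nat.le_ge_cases N1 N2) as [Hle|Hle].
  - replace N2 with (N1 + (N2 - N1))%nat by lia.
    now rewrite transcript_upto_halted.
  - replace N1 with (N2 + (N1 - N2))%nat by lia.
    now rewrite transcript_upto_halted.
Qed.

Lemma halts_with_firstn a b t k :
  halts_with P a b t -> transcript_upto P a b k = firstn k t.
Proof.
  intros [N [HN Hh]].
  destruct (next_speaker P (transcript_upto P a b k)) eqn:Hk.
  - assert (Hrun : ~ halted (transcript_upto P a b k)) by (unfold halted; congruence).
    assert (HkN : (k < N)%nat).
    { destruct (Nat.lt_ge_cases k N) as [|HNk]; [assumption|].
      replace k with (N + (k - N))%nat in Hk by lia.
      rewrite transcript_upto_halted in Hk by (rewrite HN; exact Hh). congruence. }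
    destruct (transcript_upto_prefix a b k (N - k)) as [r Hr].
    replace (k + (N - k))%nat with N in Hr by lia.
    rewrite <- HN, Hr, firstn_app, (transcript_upto_length_running _ _ _ Hrun), Nat.sub_diag.
    rewrite firstn_all2 by apply transcript_upto_length_le. simpl. now rewrite app_nil_r.
  - assert (Ht : t = transcript_upto P a b k).
    { apply (halts_with_unique a b); [now exists N | now exists k]. }
    rewrite Ht, firstn_all2 by apply transcript_upto_length_le. reflexivity.
Qed.

(* The next message is computed from the shared prefix and one party's own
   input only, so mixing the inputs of two runs with equal transcripts
   reproduces that transcript step by step. *)
Lemma halts_with_rectangle a b a' b' t :
  halts_with P a b t -> halts_with P a' b' t -> halts_with P a b' t.
Proof.
  intros Hab Ha'b'.
  assert (Hsame : forall k, transcript_upto P a b k = transcript_upto P a' b' k).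
  { intro k. now rewrite (halts_with_firstn _ _ _ _ Hab), (halts_with_firstn _ _ _ _ Ha'b'). }
  assert (Hmix : forall k, transcript_upto P a b' k = transcript_upto P a b k).
  { induction k as [|k IH]; [reflexivity|].
    pose proof (Hsame (S k)) as E. simpl in E |- *.
    rewrite IH. rewrite <- (Hsame k) in E.
    destruct (next_speaker P _) as [[|]|]; try reflexivity.
    apply app_inj_tail in E. now destruct E as [_ ->]. }
  destruct Hab as [N [HN Hh]]. exists N. now rewrite Hmix.
Qed.

Lemma transcript_upto_msg_from a b k m : valid_protocol P ->
  In m (transcript_upto P a b k) -> msg_from a m \/ msg_from b m.
Proof.
  intro Hvalid. induction k as [|k IH]; simpl; [tauto|].
  destruct (next_speaker P _) as [[|]|]; [| |exact IH];
    rewrite in_app_iff; intros [Hm|[<-|[]]]; auto.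
  - left. apply Hvalid.
  - right. apply Hvalid.
Qed.

End Transcripts.

Section Counting.

Context {A : Type}.

Fixpoint words_upto (s : list A) (m : nat) : list (list A) :=
  match m with
  | O => [[]]
  | S m => [] :: flat_map (fun x => map (cons x) (words_upto s m)) s
  end.

Lemma words_upto_length s m : (length (words_upto s m) <= (length s + 1) ^ m)%nat.
Proof.
  induction m as [|m IH]; simpl; [lia|].
  rewrite (flat_map_constant_length (c := length (words_upto s m)))
    by (intros; apply length_map).
  assert (1 <= (length s + 1) ^ m)%nat by (apply Nat.neq_0_lt_0, Nat.pow_nonzero; lia).
  nia.
Qed.

Lemma In_words_upto s m w :
  (length w <= m)%nat -> incl w s -> In w (words_upto s m).
Proof.
  revert w; induction m as [|m IH]; intros [|x w] Hw Hws; simpl in *; auto; try lia.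
  right. apply in_flat_map. exists x. split.
  - apply Hws. now left.
  - apply in_map, IH; [lia|]. eapply incl_cons_inv, Hws.
Qed.

Lemma NoDup_words_length_le (W : list (list A)) s m : NoDup W ->
  (forall w, In w W -> (length w <= m)%nat /\ incl w s) ->
  (length W <= (length s + 1) ^ m)%nat.
Proof.
  intros HW Hbound. eapply Nat.le_trans; [|apply words_upto_length].
  apply NoDup_incl_length; [exact HW|].
  intros w Hw. apply In_words_upto; apply Hbound, Hw.
Qed.

Lemma exists_argmax (g : A -> nat) (l : list A) :
  l <> [] -> exists x, In x l /\ forall y, In y l -> (g y <= g x)%nat.
Proof.
  induction l as [|a l IH]; intro Hl; [congruence|].
  destruct l as [|b l].
  - exists a. split; [now left|]. intros y [<-|[]]. lia.
  - destruct IH as [x [Hx Hmax]]; [discriminate|].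
    destruct (Nat.le_gt_cases (g a) (g x)).
    + exists x. split; [now right|]. intros y [<-|Hy]; auto.
    + exists a. split; [now left|]. intros y [<-|Hy]; [lia|]. specialize (Hmax y Hy). lia.
Qed.

End Counting.

Fixpoint bool_lists (n : nat) : list (list bool) :=
  match n with
  | O => [[]]
  | S n => map (cons true) (bool_lists n) ++ map (cons false) (bool_lists n)
  end.

Lemma bool_lists_length n : length (bool_lists n) = (2 ^ n)%nat.
Proof. induction n; simpl; [reflexivity|]. rewrite length_app, !length_map. lia. Qed.

Lemma In_bool_lists_length n v : In v (bool_lists n) -> length v = n.
Proof.
  revert v; induction n as [|n IH]; simpl; intros v Hv.
  - now destruct Hv as [<-|[]].
  - rewrite in_app_iff, !in_map_iff in Hv.
    destruct Hv as [[w [<- Hw]]|[w [<- Hw]]]; simpl; f_equal; auto.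
Qed.

Lemma NoDup_bool_lists n : NoDup (bool_lists n).
Proof.
  assert (Hcons : forall (b : bool) l, NoDup l -> NoDup (map (cons b) l)).
  { intros b l. apply NoDup_map_NoDup_ForallPairs. intros x y _ _ E. now injection E. }
  induction n as [|n IH]; simpl; [repeat constructor; simpl; tauto|].
  apply NoDup_app; auto.
  intros v Ht Hf. rewrite in_map_iff in Ht, Hf.
  destruct Ht as [? [<- _]], Hf as [? [E _]]. discriminate.
Qed.

Definition mistakes {X : Type} (h : hypothesis X) (s : sample X) : nat :=
  length (filter (fun z => negb (Bool.eqb (h (fst z)) (snd z))) s).

Lemma mistakes_app {X : Type} (h : hypothesis X) s1 s2 :
  mistakes h (s1 ++ s2) = (mistakes h s1 + mistakes h s2)%nat.
Proof. unfold mistakes. now rewrite filter_app, length_app. Qed.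

Lemma le_of_INR_div_le (a b N : nat) (eps : R) : (0 < N)%nat -> INR N * eps < 1 ->
  INR a / INR N <= INR b / INR N + eps -> (a <= b)%nat.
Proof.
  intros HN Heps Hle. apply lt_0_INR in HN.
  apply Rmult_le_compat_r with (r := INR N) in Hle; [|lra].
  replace (INR a / INR N * INR N) with (INR a) in Hle by (field; lra).
  replace ((INR b / INR N + eps) * INR N) with (INR b + eps * INR N) in Hle by (field; lra).
  assert (Hlt : INR a < INR (b + 1)) by (rewrite plus_INR; simpl; lra).
  apply INR_lt in Hlt. lia.
Qed.

(* Once |S| eps < 1, the additive error eps is below one mistake, so the
   learner must be exactly optimal on S. *)
Lemma learns_agnostic_mistakes {X : Type} (H : hypothesis X -> Prop) eps P sa sb t f :
  learns_agnostic H eps P -> halts_with P sa sb t ->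
  INR (length (sa ++ sb)) * eps < 1 -> H f ->
  (mistakes (output P t) (sa ++ sb) <= mistakes f (sa ++ sb))%nat.
Proof.
  intros Hlearn Ht Heps Hf.
  destruct (Hlearn sa sb) as [t' [Ht' Hopt]].
  rewrite (halts_with_unique P sa sb t' t Ht' Ht) in Hopt.
  destruct (Nat.eq_0_gt_0_cases (length (sa ++ sb))) as [Hnil|Hpos].
  - apply length_zero_iff_nil in Hnil. now rewrite Hnil.
  - exact (le_of_INR_div_le _ _ _ eps Hpos Heps (Hopt f Hf)).
Qed.

Definition point (j : nat) (b : bool) : hypothesis nat := fun x => andb (Nat.eqb x j) b.

Definition points : hypothesis nat -> Prop := fun h => exists j b, h = point j b.

Lemma points_VC_dim : VC_dim_eq points 1.
Proof.
  split.
  - exists [0%nat]. split; [repeat constructor; simpl; tauto|split; [reflexivity|]].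
    intro f. exists (point 0 (f 0%nat)). split; [now exists 0%nat, (f 0%nat)|].
    intros x [<-|[]]. reflexivity.
  - intros [|x [|y l]] Hnodup Hshat; simpl; try lia.
    destruct (Hshat (fun _ => true)) as [h [[j [b ->]] Hh]].
    assert (Hx := Hh x (or_introl eq_refl)).
    assert (Hy := Hh y (or_intror (or_introl eq_refl))).
    unfold point in Hx, Hy. apply andb_prop in Hx, Hy.
    destruct Hx as [Hx _], Hy as [Hy _]. apply Nat.eqb_eq in Hx, Hy. subst.
    inversion Hnodup. simpl in *. tauto.
Qed.

Fixpoint graph_sample (f : nat -> bool) (n : nat) : sample nat :=
  match n with O => [] | S n => (n, f n) :: graph_sample f n end.

Lemma graph_sample_length f n : length (graph_sample f n) = n.
Proof. induction n; simpl; auto. Qed.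

Lemma mistakes_graph_sample_S h f n : mistakes h (graph_sample f (S n)) =
  ((if Bool.eqb (h n) (f n) then 0 else 1) + mistakes h (graph_sample f n))%nat.
Proof. unfold mistakes. simpl. now destruct (Bool.eqb (h n) (f n)). Qed.

Lemma mistakes_graph_sample_negb h f n :
  (mistakes h (graph_sample f n) + mistakes h (graph_sample (fun i => negb (f i)) n) = n)%nat.
Proof.
  induction n as [|n IH]; [reflexivity|].
  rewrite !mistakes_graph_sample_S. destruct (h n), (f n); simpl; lia.
Qed.

(* The crossed sample [graph_sample f1 n ++ graph_sample (negb \o f2) n] has
   both labels at every point where f1 and f2 agree, and label f1 j twice at
   j; the singleton [point j (f1 j)] is right on both copies of j. *)
Lemma mistakes_point_crossed f1 f2 j n : f1 j <> f2 j ->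
  (mistakes (point j (f1 j)) (graph_sample f1 n ++ graph_sample (fun i => negb (f2 i)) n)
   + mistakes (point j (f2 j)) (graph_sample f2 n ++ graph_sample (fun i => negb (f1 i)) n)
   + (if (j <? n)%nat then 2 else 0) = n + n)%nat.
Proof.
  intro Hj. rewrite !mistakes_app.
  induction n as [|n IH]; [reflexivity|].
  rewrite !mistakes_graph_sample_S. unfold point at 1 3 5 7. cbv beta.
  destruct (Nat.eqb_spec n j) as [->|Hne].
  - rewrite Nat.ltb_irrefl in IH. rewrite (proj2 (Nat.ltb_lt j (S j))) by lia.
    destruct (f1 j), (f2 j); simpl in *; congruence || lia.
  - destruct (Nat.ltb_spec j n), (Nat.ltb_spec j (S n)); try lia;
      destruct (f1 n), (f2 n); simpl; lia.
Qed.

Definition labels (v : list bool) : nat -> bool := fun i => nth i v false.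

Definition co_labels (v : list bool) : nat -> bool := fun i => negb (labels v i).

Definition msg_alphabet (n : nat) : list (message nat) :=
  MBit true :: MBit false :: flat_map (fun i => [MEx (i, true); MEx (i, false)]) (seq 0 n).

Lemma msg_alphabet_length n : length (msg_alphabet n) = (2 * n + 2)%nat.
Proof.
  unfold msg_alphabet. cbn [length].
  rewrite (flat_map_constant_length (c := 2%nat)) by reflexivity.
  rewrite length_seq. lia.
Qed.

Lemma graph_sample_In f n z : In z (graph_sample f n) -> (fst z < n)%nat.
Proof.
  induction n as [|n IH]; simpl; [tauto|]. intros [<-|Hz]; simpl; [lia|].
  specialize (IH Hz). lia.
Qed.

Lemma msg_from_graph_sample f n m : msg_from (graph_sample f n) m -> In m (msg_alphabet n).
Proof.
  unfold msg_alphabet. destruct m as [[i b]|[|]]; simpl; try tauto.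
  intro Hz. apply graph_sample_In in Hz. simpl in Hz.
  right; right. apply in_flat_map. exists i. split; [apply in_seq; lia|].
  destruct b; simpl; tauto.
Qed.

Lemma halts_with_labels_injective eps P n v v' t :
  learns_agnostic points eps P -> INR (n + n) * eps < 1 ->
  length v = n -> length v' = n ->
  halts_with P (graph_sample (labels v) n) (graph_sample (co_labels v) n) t ->
  halts_with P (graph_sample (labels v') n) (graph_sample (co_labels v') n) t ->
  v = v'.
Proof.
  intros Hlearn Heps Hv Hv' Ht Ht'.
  apply nth_ext with (d := false) (d' := false); [congruence|].
  intros j Hj. rewrite Hv in Hj.
  destruct (Bool.bool_dec (labels v j) (labels v' j)) as [|Hne]; [assumption|exfalso].
  assert (Hsmall : forall f g, INR (length (graph_sample f n ++ graph_sample g n)) * eps < 1)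
    by (intros; now rewrite length_app, !graph_sample_length).
  assert (Hpoint : forall b, points (point j b)) by (intro b; now exists j, b).
  pose proof (learns_agnostic_mistakes points eps P _ _ t _ Hlearn
    (halts_with_rectangle P _ _ _ _ t Ht Ht') (Hsmall _ _) (Hpoint (labels v j))) as Hopt.
  pose proof (learns_agnostic_mistakes points eps P _ _ t _ Hlearn
    (halts_with_rectangle P _ _ _ _ t Ht' Ht) (Hsmall _ _) (Hpoint (labels v' j))) as Hopt'.
  pose proof (mistakes_point_crossed (labels v) (labels v') j n Hne) as Hcrossed.
  pose proof (mistakes_graph_sample_negb (output P t) (labels v) n).
  pose proof (mistakes_graph_sample_negb (output P t) (labels v') n).
  apply Nat.ltb_lt in Hj. rewrite Hj in Hcrossed.
  rewrite !mistakes_app in Hopt, Hopt', Hcrossed. unfold co_labels in *. lia.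
Qed.

Lemma transcript_length_lower_bound eps P n :
  valid_protocol P -> learns_agnostic points eps P -> INR (n + n) * eps < 1 ->
  exists sa sb t, halts_with P sa sb t /\ (2 ^ n <= (2 * n + 3) ^ length t)%nat.
Proof.
  intros Hvalid Hlearn Heps.
  destruct (choice (fun v t =>
    halts_with P (graph_sample (labels v) n) (graph_sample (co_labels v) n) t)) as [tr Htr].
  { intro v. destruct (Hlearn (graph_sample (labels v) n) (graph_sample (co_labels v) n))
      as [t [Ht _]]. now exists t. }
  destruct (exists_argmax (fun v => length (tr v)) (bool_lists n)) as [v0 [_ Hmax]].
  { intro E. pose proof (bool_lists_length n) as L. rewrite E in L.
    pose proof (Nat.pow_nonzero 2 n). simpl in L. lia. }
  do 3 eexists. split; [apply (Htr v0)|].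
  rewrite <- bool_lists_length, <- (length_map tr).
  replace (2 * n + 3)%nat with (length (msg_alphabet n) + 1)%nat
    by (rewrite msg_alphabet_length; lia).
  apply NoDup_words_length_le.
  - apply NoDup_map_NoDup_ForallPairs; [|apply NoDup_bool_lists].
    intros v v' Hv Hv' E.
    apply (halts_with_labels_injective eps P n v v' (tr v)); auto using In_bool_lists_length.
    rewrite E. apply Htr.
  - intros t Ht. apply in_map_iff in Ht. destruct Ht as [v [<- Hv]].
    split; [now apply Hmax|].
    intros m Hm. destruct (Htr v) as [N [HN _]]. rewrite <- HN in Hm.
    destruct (transcript_upto_msg_from P _ _ N m Hvalid Hm);
      eapply msg_from_graph_sample; eassumption.
Qed.

Lemma exists_nat_between (x : R) : 0 <= x -> exists n : nat, x < INR n <= x + 1.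
Proof.
  intro Hx. destruct (archimed x) as [Hup1 Hup2].
  assert (Hpos : (0 < up x)%Z) by (apply lt_IZR; lra).
  exists (Z.to_nat (up x)). rewrite INR_IZR_INZ, Z2Nat.id by lia. lra.
Qed.

Lemma ln_le (x y : R) : 0 < x -> x <= y -> ln x <= ln y.
Proof.
  intros Hx [Hlt|<-]; [left; now apply ln_increasing|right; reflexivity].
Qed.

Lemma count_bound_length_ge (eps : R) (n m : nat) : 0 < eps < 1 / 8 ->
  / (4 * eps) < INR n <= / (4 * eps) + 1 -> (2 ^ n <= (2 * n + 3) ^ m)%nat ->
  ln 2 / 8 / (eps * ln (1 / eps) ^ 1) <= INR m.
Proof.
  intros [He0 He1] [Hn1 Hn2] Hcount.
  set (u := / eps) in *.
  assert (Hu : 8 < u) by (unfold u; apply Rmult_lt_reg_r with eps; [lra|]; rewrite Rinv_l; lra).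
  replace (/ (4 * eps)) with (u / 4) in Hn1, Hn2 by (unfold u; field; lra).
  replace (1 / eps) with u by (unfold u; field; lra).
  assert (Hln2 : 0 < ln 2) by (rewrite <- ln_1; apply ln_increasing; lra).
  assert (Hlnu : 0 < ln u) by (rewrite <- ln_1; apply ln_increasing; lra).
  assert (Hreal : 2 ^ n <= (u ^ 2) ^ m).
  { apply le_INR in Hcount. rewrite !pow_INR, plus_INR, mult_INR in Hcount.
    simpl (INR 2) in Hcount; simpl (INR 3) in Hcount.
    eapply Rle_trans; [exact Hcount|]. apply pow_incr. split; [pose proof (pos_INR n)|]; nra. }
  apply ln_le in Hreal; [|apply pow_lt; lra].
  rewrite <- pow_mult, !ln_pow, mult_INR in Hreal by nra. simpl (INR 2) in Hreal.
  assert (Hm : 0 <= INR m) by apply pos_INR.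
  assert (Hnln : u / 4 * ln 2 <= INR n * ln 2) by (apply Rmult_le_compat_r; lra).
  replace (ln 2 / 8 / (eps * ln u ^ 1)) with (u * ln 2 / (8 * ln u))
    by (unfold u in *; field; lra).
  apply Rmult_le_reg_r with (8 * ln u); [lra|].
  unfold Rdiv. rewrite Rmult_assoc, Rinv_l, Rmult_1_r by lra. nra.
Qed.

Theorem theorem3 :
  exists (X : Type) (H : hypothesis X -> Prop),
    VC_dim_eq H 1 /\
    exists (c : R) (k : nat) (eps0 : R),
      0 < c /\ 0 < eps0 < 1 /\
      forall eps : R, 0 < eps < eps0 ->
      forall P : protocol X, valid_protocol P -> learns_agnostic H eps P ->
        sample_complexity_ge P (c / (eps * (ln (1 / eps)) ^ k)).
Proof.
  exists nat, points. split; [exact points_VC_dim|].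
  assert (Hln2 : 0 < ln 2) by (rewrite <- ln_1; apply ln_increasing; lra).
  exists (ln 2 / 8), 1%nat, (1 / 8). split; [lra|]. split; [lra|].
  intros eps Heps P Hvalid Hlearn.
  assert (Hinv : 0 <= / (4 * eps)) by (left; apply Rinv_0_lt_compat; lra).
  destruct (exists_nat_between _ Hinv) as [n Hn].
  assert (Hsmall : INR (n + n) * eps < 1).
  { rewrite plus_INR.
    assert (INR n * eps <= (/ (4 * eps) + 1) * eps) by (apply Rmult_le_compat_r; lra).
    replace ((/ (4 * eps) + 1) * eps) with (/ 4 + eps) in * by (field; lra). lra. }
  destruct (transcript_length_lower_bound eps P n Hvalid Hlearn Hsmall)
    as [sa [sb [t [Ht Hcount]]]].
  exists sa, sb, t. split; [exact Ht|].
  exact (count_bound_length_ge eps n (length t) Heps Hn Hcount).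
Qed.
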